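(* Let $P(Y)\in R[Y]$ be an $m$-triangular polynomial of degree $d$ and let $k_0,\ldots,k_a\ge0$ be integers. Then the polynomial $P(Y)\prod_{j=0}^a\big(U^{(j)}(Y)\big)^{k_j}$ is $\big(m+\sum_{j=0}^ak_j\big)$-triangular. In particular, if $n=\sum_{j=0}^ak_j$ and $\sum_{j=0}^ajk_j=n$, this polynomial is $(m+n)$-triangular of degree $d+(a-1)n$.
   Context: Fix a positive integer $a$ and variables $u_0,\ldots,u_a$. Let $R=\mathbb{C}[u_0,\ldots,u_{a-1}][u_a,u_a^{-1}]$ and $U(Y)=\sum_{j=0}^au_jY^j\in R[Y]$; $U^{(j)}$ is its $j$-th derivative with respect to $Y$. $\mathbb{Q}_+$ denotes the positive rational numbers. For an integer $m\ge1$, a polynomial $P(Y)=\sum_{l=0}^dp_lY^l\in R[Y]$ of degree $d\ge a$ is called $m$-triangular if for every $l$ with $d-a\le l\le d$ one has $p_l=q_lu_a^{m-1}u_{a-d+l}+P_l(u_{a-d+l+1},\ldots,u_a)$ for some $q_l\in\mathbb{Q}_+$ and some polynomial $P_l\in\mathbb{C}[u_{a-d+l+1},\ldots,u_a]$ (for $l=d$ this means $p_d=q_du_a^m$). *)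

From mathcomp Require Import all_boot all_algebra.
From mathcomp Require Import Rstruct.
From mathcomp Require Import complex.
From mathcomp Require Import mpoly.
Set Implicit Arguments. Unset Strict Implicit. Unset Printing Implicit Defensive.
Import GRing.Theory Num.Theory.
Local Open Scope ring_scope.

Local Notation "x %:F" := (@FracField.tofrac _ x).

Definition CC : Type := complex Rdefinitions.R.

(* Mp a = C[u_0,...,u_a]; variable u_j is 'X_j. *)
Notation Mp a := {mpoly CC[a.+1]}.
(* Fr a = its fraction field; R = C[u_0..u_{a-1}][u_a, u_a^{-1}] is the
   subring of Fr a of elements f / u_a^e (see inR). *)
Notation Fr a := {fraction {mpoly CC[a.+1]}}.

Definition uvar (a j : nat) : Mp a := 'X_(inord j).
Definition ufr (a j : nat) : Fr a := (uvar a j)%:F.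

Definition inR (a : nat) (x : Fr a) : Prop :=
  exists (e : nat) (f : Mp a), x = f%:F / ufr a a ^+ e.

Definition Rpoly (a : nat) (P : {poly Fr a}) : Prop := forall i, inR P`_i.

Definition Upoly (a : nat) : {poly Fr a} :=
  \sum_(j < a.+1) (ufr a j)%:P * 'X^j.

Definition in_vars_from (a k : nat) (p : Mp a) : Prop :=
  forall mon : 'X_{1..a.+1}, mon \in msupp p ->
    forall i : 'I_a.+1, (i < k)%N -> mon i = 0%N.

Definition triangular (a m d : nat) (P : {poly Fr a}) : Prop :=
  [/\ (0 < m)%N /\ Rpoly P, size P = d.+1, (a <= d)%N,
      (exists q : rat, 0 < q /\
         P`_d = ((ratr q : CC)%:MP * uvar a a ^+ m)%:F)
    & forall l : nat, (d - a <= l < d)%N ->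
      exists q : rat, 0 < q /\
      exists Pl : Mp a, in_vars_from (l - (d - a)).+1 Pl /\
        P`_l = ((ratr q : CC)%:MP * uvar a a ^+ (m - 1) * uvar a (l - (d - a))
                + Pl)%:F].

From mathcomp Require Import all_boot all_algebra.
From mathcomp Require Import Rstruct complex mpoly.
From mathcomp Require Import ring lra zify.
Set Implicit Arguments. Unset Strict Implicit. Unset Printing Implicit Defensive.
Import GRing.Theory Num.Theory.
Local Open Scope ring_scope.
Local Notation "x %:F" := (@FracField.tofrac _ x).

(* Multiplying by the factors of the product one at a time, it suffices to
   show that P V is (m+1)-triangular of degree d + a - j for V = U^(j).  The
   coefficients of V are V_t = (j+t)^_j u_(j+t) for t <= a - j, so the top
   coefficient of P V is a^_j p_d u_a.  The coefficient i places below the top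
   receives u_a^m u_(a-i) with a positive weight from p_(d-i) V_(a-j) and a
   nonnegative one from p_d V_(a-j-i); every other product p_l V_t involves
   only u_(a-i+1), ..., u_a. *)

Section VarsFrom.

Variables (a k : nat).
Implicit Types p q : Mp a.

Lemma in_vars_from0 : in_vars_from k (0 : Mp a).
Proof. by move=> mon; rewrite -mpolyC0 msupp0. Qed.

Lemma in_vars_fromC (c : CC) : in_vars_from k (c%:MP : Mp a).
Proof.
move=> mon; rewrite msuppC; case: eqP => // _.
by rewrite mem_seq1 => /eqP -> i _; rewrite mnm0E.
Qed.

Lemma in_vars_fromD p q :
  in_vars_from k p -> in_vars_from k q -> in_vars_from k (p + q).
Proof. by move=> hp hq mon /msuppD_le; rewrite mem_cat => /orP [/hp|/hq]. Qed.

Lemma in_vars_fromM p q :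
  in_vars_from k p -> in_vars_from k q -> in_vars_from k (p * q).
Proof.
move=> hp hq mon /msuppM_le /allpairsP [[m1 m2] /= [h1 h2 ->]] i hi.
by rewrite mnmDE (hp _ h1 _ hi) (hq _ h2 _ hi).
Qed.

Lemma in_vars_fromX p n : in_vars_from k p -> in_vars_from k (p ^+ n).
Proof.
move=> hp; elim: n => [|n ih]; last by rewrite exprS; apply: in_vars_fromM.
by rewrite expr0 -mpolyC1; apply: in_vars_fromC.
Qed.

Lemma in_vars_fromMn p n : in_vars_from k p -> in_vars_from k (p *+ n).
Proof.
move=> hp; elim: n => [|n ih]; last by rewrite mulrS; apply: in_vars_fromD.
by rewrite mulr0n; apply: in_vars_from0.
Qed.

Lemma in_vars_from_uvar j : (k <= j <= a)%N -> in_vars_from k (uvar a j).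
Proof.
move=> /andP [kj ja] mon; rewrite /uvar msuppX mem_seq1 => /eqP -> i hi.
rewrite mnm1E; apply/eqP; rewrite eqb0; apply/eqP => e.
by move: hi; rewrite -e inordK //; lia.
Qed.

End VarsFrom.

Lemma in_vars_from_le a k k' (p : Mp a) :
  (k <= k')%N -> in_vars_from k' p -> in_vars_from k p.
Proof. by move=> kk' hp mon hm i hi; apply: hp => //; lia. Qed.

Lemma uvar_neq0 a j : uvar a j != 0.
Proof. by rewrite -msupp_eq0 /uvar msuppX. Qed.

Lemma ufr_neq0 a j : ufr a j != 0.
Proof. by rewrite /ufr tofrac_eq0 uvar_neq0. Qed.

Section RpolyU.

Variable a : nat.

Lemma inR_tofrac (f : Mp a) : inR f%:F.
Proof. by exists 0%N, f; rewrite expr0 divr1. Qed.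

Lemma inR0 : inR (0 : Fr a).
Proof. by rewrite -tofrac0; apply: inR_tofrac. Qed.

Lemma inRD (x y : Fr a) : inR x -> inR y -> inR (x + y).
Proof.
move=> [e [f ->]] [e' [g ->]]; exists (e + e')%N.
exists (f * uvar a a ^+ e' + g * uvar a a ^+ e).
rewrite tofracD !tofracM !tofracXn -/(ufr a a) exprD.
by rewrite addf_div // expf_neq0 // ufr_neq0.
Qed.

Lemma inRM (x y : Fr a) : inR x -> inR y -> inR (x * y).
Proof.
move=> [e [f ->]] [e' [g ->]]; exists (e + e')%N, (f * g).
by rewrite !tofracM exprD mulf_div.
Qed.

Lemma RpolyM (p q : {poly Fr a}) : Rpoly p -> Rpoly q -> Rpoly (p * q).
Proof.
move=> hp hq i; rewrite coefM.
by apply: (big_ind (@inR a) inR0 inRD) => t _; apply: inRM.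
Qed.

Lemma coef_Upoly t : (Upoly a)`_t = if (t <= a)%N then ufr a t else 0.
Proof.
rewrite /Upoly coef_sum.
under eq_bigr => j _ do rewrite coefCM coefXn.
case: leqP => ht.
  rewrite (bigD1 (Ordinal (ht : (t < a.+1)%N))) //= eqxx mulr1 big1 ?addr0 //.
  move=> j hj; case: eqP => [e|]; last by rewrite mulr0.
  by move: hj; rewrite -val_eqE /= e eqxx.
apply: big1 => j _; case: eqP => [e|]; last by rewrite mulr0.
by move: (ltn_ord j); rewrite -e; lia.
Qed.

Lemma coef_derivn_Upoly j t : ((Upoly a)^`(j))`_t =
  if (j + t <= a)%N then ufr a (j + t) *+ (j + t) ^_ j else 0.
Proof. by rewrite coef_derivn coef_Upoly; case: ifP; rewrite ?mul0rn. Qed.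

Lemma Rpoly_derivn_Upoly j : Rpoly ((Upoly a)^`(j)).
Proof.
move=> t; rewrite coef_derivn_Upoly; case: ifP => _; last exact: inR0.
by rewrite /ufr -tofracMn; apply: inR_tofrac.
Qed.

End RpolyU.

Lemma coefM_size_le (R : nzRingType) (p q : {poly R}) n l :
  (size q <= n.+1)%N -> (n <= l)%N ->
  (p * q)`_l = \sum_(t < n.+1) p`_(l - t) * q`_t.
Proof.
move=> /leq_sizeP szq nl.
rewrite coefMr [RHS](big_ord_widen l.+1 (fun t => p`_(l - t) * q`_t)) //.
rewrite [RHS]big_mkcond /=; apply: eq_bigr => t _; case: ltnP => // ht.
by rewrite szq ?mulr0.
Qed.

(* [triangular_coef a e s q x] is the shape
   x = q u_a^e u_s + P(u_(s+1), ..., u_a) of the coefficient p_l of an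
   m-triangular polynomial, for e = m - 1 and s = a - d + l. *)
Definition triangular_coef (a e s : nat) (q : rat) (x : Fr a) : Prop :=
  exists R : Mp a, in_vars_from s.+1 R /\
    x = ((ratr q : CC)%:MP * uvar a a ^+ e * uvar a s + R)%:F.

Section TriangularCoef.

Variables (a e s : nat).

Lemma mpolyC_ratrMn (c : rat) N :
  (ratr (c * N%:R) : CC)%:MP = (ratr c)%:MP * N%:R :> Mp a.
Proof. by rewrite [ratr _]rmorphM rmorph_nat [(_ * _)%:MP]mpolyCM mpolyC_nat. Qed.

Lemma triangular_coef_vars (R : Mp a) :
  in_vars_from s.+1 R -> triangular_coef e s 0 R%:F.
Proof. by exists R; rewrite rmorph0 mpolyC0 !mul0r add0r. Qed.

Lemma triangular_coefD q q' (x y : Fr a) : triangular_coef e s q x ->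
  triangular_coef e s q' y -> triangular_coef e s (q + q') (x + y).
Proof.
move=> [R [vR ->]] [R' [vR' ->]]; exists (R + R'); split.
  exact: in_vars_fromD.
by rewrite -tofracD [ratr (_ + _)]rmorphD [(_ + _)%:MP]mpolyCD; congr (_%:F); ring.
Qed.

Lemma triangular_coef0 : triangular_coef e s 0 (0 : Fr a).
Proof. by rewrite -tofrac0; apply/triangular_coef_vars/in_vars_from0. Qed.

Lemma triangular_coef_sum n (F : 'I_n -> Fr a) :
  (forall t, exists2 q, 0 <= q & triangular_coef e s q (F t)) ->
  exists2 q, 0 <= q & triangular_coef e s q (\sum_(t < n) F t).
Proof.
move=> hF; apply: (big_ind (fun x => exists2 q, 0 <= q & triangular_coef e s q x)).
- by exists 0 => //; apply: triangular_coef0.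
- move=> x y [q q_ge0 hx] [q' q'_ge0 hy]; exists (q + q'); first exact: addr_ge0.
  exact: triangular_coefD.
- by move=> t _; apply: hF.
Qed.

Lemma triangular_coef_vars_from s' q (x : Fr a) : (s < s' <= a)%N ->
  triangular_coef e s' q x -> exists2 R, in_vars_from s.+1 R & x = R%:F.
Proof.
move=> /andP [ss' s'a] [R [vR ->]]; eexists; last exact: erefl.
apply: in_vars_fromD; last by apply: (in_vars_from_le _ vR); rewrite ltnS ltnW.
apply: in_vars_fromM; last by apply: in_vars_from_uvar; rewrite ss' s'a.
apply: in_vars_fromM; first exact: in_vars_fromC.
by apply: in_vars_fromX; apply: in_vars_from_uvar; lia.
Qed.

Lemma triangular_coefM_ua q (x : Fr a) N : (s < a)%N -> triangular_coef e s q x ->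
  triangular_coef e.+1 s (q * N%:R) (x * (ufr a a *+ N)).
Proof.
move=> sa [R [vR ->]]; exists (R * (uvar a a *+ N)); split.
  apply: in_vars_fromM; first exact: vR.
  by apply: in_vars_fromMn; apply: in_vars_from_uvar; rewrite sa leqnn.
rewrite /ufr -tofracMn -tofracM; congr (_%:F).
by rewrite mpolyC_ratrMn exprSr; ring.
Qed.

Lemma triangular_coef_uaX q N : triangular_coef e s (q * N%:R)
  (((ratr q : CC)%:MP * uvar a a ^+ e)%:F * (ufr a s *+ N)).
Proof.
exists 0; split; first exact: in_vars_from0.
by rewrite /ufr -tofracMn -tofracM mpolyC_ratrMn; congr (_%:F); ring.
Qed.

End TriangularCoef.

Section MulDerivnUpoly.

Variables (a m d j : nat) (P : {poly Fr a}) (q0 : rat).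
Hypotheses (j_le_a : (j <= a)%N) (m_gt0 : (0 < m)%N) (a_le_d : (a <= d)%N).
Hypotheses (RP : Rpoly P) (sizeP : size P = d.+1) (q0_gt0 : 0 < q0).
Hypothesis lead_P : P`_d = ((ratr q0 : CC)%:MP * uvar a a ^+ m)%:F.
Hypothesis lower_P : forall l, (d - a <= l < d)%N ->
  exists q : rat, 0 < q /\ triangular_coef (m - 1) (l - (d - a)) q P`_l.

Local Notation n := (a - j)%N.
Local Notation V := ((Upoly a)^`(j)).

Lemma coef_V t : V`_t = if (t <= n)%N then ufr a (j + t) *+ (j + t) ^_ j else 0.
Proof.
rewrite coef_derivn_Upoly.
by have -> : (j + t <= a)%N = (t <= n)%N by apply/idP/idP; lia.
Qed.

Lemma size_V_le : (size V <= n.+1)%N.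
Proof. by apply/leq_sizeP => t ht; rewrite coef_V ifN //; lia. Qed.

Lemma coefP_eq0 l : (d < l)%N -> P`_l = 0.
Proof. by move=> dl; apply: nth_default; rewrite sizeP. Qed.

Lemma coef_PV i : (i <= a)%N ->
  (P * V)`_(d + n - i) = \sum_(t < n.+1) P`_(d + n - i - t) * V`_t.
Proof. by move=> ia; apply: coefM_size_le size_V_le _; lia. Qed.

Lemma lead_coef_PV :
  (P * V)`_(d + n) = ((ratr (q0 * (a ^_ j)%:R) : CC)%:MP * uvar a a ^+ m.+1)%:F.
Proof.
rewrite -[(d + n)%N]subn0 coef_PV // big_ord_recr /= big1 ?add0r; last first.
  by move=> t _; rewrite coefP_eq0 ?mul0r //; have := ltn_ord t; lia.
rewrite subn0 addnK coef_V leqnn subnKC // lead_P /ufr -tofracMn -tofracM.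
by rewrite mpolyC_ratrMn exprSr; congr (_%:F); ring.
Qed.

Lemma lead_coef_PV_neq0 : (P * V)`_(d + n) != 0.
Proof.
rewrite lead_coef_PV tofrac_eq0 mulf_neq0 ?expf_neq0 ?uvar_neq0 //.
rewrite mpolyC_eq0 fmorph_eq0 mulf_neq0 ?lt0r_neq0 //.
by rewrite ltr0n ffact_gt0.
Qed.

Lemma size_PV : size (P * V) = (d + n).+1.
Proof.
apply/eqP; rewrite eqn_leq; apply/andP; split.
  by apply: (leq_trans (size_polyMleq _ _)); rewrite sizeP; have := size_V_le; lia.
rewrite ltnNge; apply/negP => /leq_sizeP /(_ (d + n)%N (leqnn _)) PVdn.
by move: lead_coef_PV_neq0; rewrite PVdn eqxx.
Qed.

Lemma coef_PV_term i t : (0 < i <= a)%N -> (t < n)%N ->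
  exists2 c : rat, 0 <= c & triangular_coef m (a - i) c (P`_(d + n - i - t) * V`_t).
Proof.
move=> /andP [i_gt0 i_le_a] tn; rewrite coef_V (ltnW tn).
case: (ltngtP (t + i) n) => [lt_n|gt_n|eq_n].
- exists 0; first by [].
  by rewrite coefP_eq0 ?mul0r; [apply: triangular_coef0 | lia].
- have [|q [_ hPl]] := @lower_P (d + n - i - t); first lia.
  have jt : (a - i < j + t <= a)%N by lia.
  have [|R vR ->] := triangular_coef_vars_from (s := (a - i)%N) _ hPl; first lia.
  exists 0; first by [].
  rewrite /ufr -tofracMn -tofracM.
  apply: triangular_coef_vars; apply: in_vars_fromM; first exact: vR.
  by apply: in_vars_fromMn; apply: in_vars_from_uvar.
- have -> : (d + n - i - t = d)%N by lia.
  have -> : (j + t = a - i)%N by lia.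
  rewrite lead_P; exists (q0 * ((a - i) ^_ j)%:R); last exact: triangular_coef_uaX.
  by apply: mulr_ge0; [rewrite le0r q0_gt0 orbT | exact: ler0n].
Qed.

Lemma lower_coef_PV i : (0 < i <= a)%N ->
  exists q : rat, 0 < q /\ triangular_coef m (a - i) q (P * V)`_(d + n - i).
Proof.
move=> hi; have /andP [i_gt0 i_le_a] := hi.
rewrite coef_PV // big_ord_recr /=.
have [c c_ge0 sum_coef] :=
  triangular_coef_sum (fun t : 'I_n => coef_PV_term hi (ltn_ord t)).
have [|q [q_gt0 hPl]] := @lower_P (d - i); first lia.
have e1 : (d + n - i - n = d - i)%N by lia.
have e2 : (d - i - (d - a) = a - i)%N by lia.
have lt_a : (a - i < a)%N by lia.
have Vn : V`_n = ufr a a *+ a ^_ j by rewrite coef_V leqnn subnKC.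
rewrite e2 in hPl; have := triangular_coefM_ua (a ^_ j) lt_a hPl.
rewrite subn1 prednK // e1 Vn => last_coef.
exists (c + q * (a ^_ j)%:R); split; last exact: triangular_coefD.
have : 0 < q * (a ^_ j)%:R by rewrite mulr_gt0 // ltr0n ffact_gt0.
lra.
Qed.

Lemma triangular_PV : triangular m.+1 (d + n) (P * V).
Proof.
split.
- by split => //; apply: RpolyM => //; apply: Rpoly_derivn_Upoly.
- exact: size_PV.
- lia.
- by exists (q0 * (a ^_ j)%:R); rewrite lead_coef_PV mulr_gt0 ?ltr0n ?ffact_gt0.
move=> l /andP [l_ge l_lt].
have [|q [q_gt0 hq]] := @lower_coef_PV (d + n - l); first lia.
have e1 : (d + n - (d + n - l) = l)%N by lia.
have e2 : (a - (d + n - l) = l - (d + n - a))%N by lia.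
by rewrite e1 e2 in hq; exists q; rewrite subSS subn0.
Qed.

End MulDerivnUpoly.

Lemma triangular_mul_derivn_Upoly a m d j (P : {poly Fr a}) : (j <= a)%N ->
  triangular m d P -> triangular m.+1 (d + (a - j)) (P * (Upoly a)^`(j)).
Proof.
move=> j_le_a [[m_gt0 RP] sizeP a_le_d [q0 [q0_gt0 lead_P]] lower_P].
exact: triangular_PV j_le_a m_gt0 a_le_d RP sizeP q0_gt0 lead_P lower_P.
Qed.

Lemma triangular_mul_derivn_UpolyX a m d j k (P : {poly Fr a}) : (j <= a)%N ->
  triangular m d P ->
  triangular (m + k) (d + k * (a - j)) (P * ((Upoly a)^`(j)) ^+ k).
Proof.
move=> j_le_a hP; elim: k => [|k IHk]; first by rewrite expr0 mulr1 !addn0.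
by rewrite exprSr mulrA addnS mulSnr addnA; apply: triangular_mul_derivn_Upoly.
Qed.

Lemma triangular_mul_prod_derivn_Upoly a m d N (k : nat -> nat) (P : {poly Fr a}) :
  (N <= a.+1)%N -> triangular m d P ->
  triangular (m + \sum_(j < N) k j) (d + \sum_(j < N) k j * (a - j))
    (P * \prod_(j < N) ((Upoly a)^`(j)) ^+ k j).
Proof.
move=> + hP; elim: N => [|N IHN] N_le; first by rewrite !big_ord0 mulr1 !addn0.
rewrite !big_ord_recr /= mulrA !addnA.
by apply: triangular_mul_derivn_UpolyX; [lia | apply: IHN; lia].
Qed.

Lemma sum_mul_subn a (k : nat -> nat) :
  (\sum_(j < a.+1) k j * (a - j) + \sum_(j < a.+1) j * k j =
   a * \sum_(j < a.+1) k j)%N.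
Proof.
rewrite -big_split big_distrr /=; apply: eq_bigr => j _.
by have := ltn_ord j; nia.
Qed.

Theorem mainTheorem5 (a : nat) (Ha : (0 < a)%N) (m d : nat) (P : {poly Fr a})
    (k : nat -> nat) :
  triangular m d P ->
  let Q := P * \prod_(j < a.+1) ((Upoly a)^`(j)) ^+ k j in
  triangular (m + \sum_(j < a.+1) k j)%N (size Q).-1 Q /\
  (forall n : nat, n = (\sum_(j < a.+1) k j)%N ->
     (\sum_(j < a.+1) j * k j)%N = n ->
     triangular (m + n)%N (d + (a - 1) * n)%N Q).
Proof.
move=> hP Q; have hQ := triangular_mul_prod_derivn_Upoly k (leqnn a.+1) hP.
split; first by case: (hQ) => _ -> .
move=> n n_def weight_n.
have deg : (\sum_(j < a.+1) k j * (a - j) = (a - 1) * n)%N.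
  by have := sum_mul_subn a k; rewrite -n_def weight_n mulnBl mul1n; lia.
by rewrite -deg n_def.
Qed.
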